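(* Let $|q|\ne1$, $q\ne0$, $x\in\mathbb C^*$ with none of $x^{\pm1},x^{\pm2}$ an integer power of $q$, and $m\in\mathbb Z$. With $LA_m=A_{m+1}C_m-A_mC_{m+1}$ and $LB_m=B_{m+1}C_m-B_mC_{m+1}$ (all at $(x,q)$), $$C_m(x,q)=\frac1{x^{-1}-x}\big(A_m(x,q)LB_m(x,q)-B_m(x,q)LA_m(x,q)\big),$$ $$C_{m+1}(x,q)=\frac1{x^{-1}-x}\big(A_{m+1}(x,q)LB_m(x,q)-B_{m+1}(x,q)LA_m(x,q)\big).$$
   Context: Notation: $(a;q)_k=\prod_{j=0}^{k-1}(1-aq^j)$. For $|q|\ne1$: $C_m(x,q)=\sum_{k\ge0}(-1)^k\frac{q^{k(k+1)/2+km}}{(x^{-1};q)_{k+1}(x;q)_{k+1}}$, $A_m(x,q)=\sum_{k\ge0}(-1)^k\frac{q^{k(k+1)/2+km}x^{k+m}}{(q;q)_k(x^2q;q)_k}$, $B_m(x,q)=A_m(x^{-1},q)$. *)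

From HB Require Import structures.
From mathcomp Require Import all_boot all_order all_algebra.
From mathcomp Require Import complex.
From mathcomp Require Import all_classical all_reals all_analysis.
Set Implicit Arguments. Unset Strict Implicit. Unset Printing Implicit Defensive.
Import Order.TTheory GRing.Theory Num.Theory.
Import numFieldTopology.Exports numFieldNormedType.Exports.
Local Open Scope ring_scope.
Local Open Scope complex_scope.

HB.instance Definition _ (R : rcfType) := NormedModule.copy R[i] (R[i])^o.

Section QSeries.
Variable R : realType.
Notation C := R[i].

Definition qpoch (a q : C) (k : nat) : C := \prod_(j < k) (1 - a * q ^+ j).

Definition Cm (m : int) (x q : C) : C :=
  \big[+%R/0%R]_(0 <= k <oo)
    ((-1) ^+ k * q ^ (((k * k.+1)./2)%:Z + k%:Z * m)
       / (qpoch x^-1 q k.+1 * qpoch x q k.+1)).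

Definition Am (m : int) (x q : C) : C :=
  \big[+%R/0%R]_(0 <= k <oo)
    ((-1) ^+ k * q ^ (((k * k.+1)./2)%:Z + k%:Z * m) * x ^ (k%:Z + m)
       / (qpoch q q k * qpoch (x ^+ 2 * q) q k)).

Definition Bm (m : int) (x q : C) : C := Am m x^-1 q.

Definition LAm (m : int) (x q : C) : C :=
  Am (m + 1) x q * Cm m x q - Am m x q * Cm (m + 1) x q.
Definition LBm (m : int) (x q : C) : C :=
  Bm (m + 1) x q * Cm m x q - Bm m x q * Cm (m + 1) x q.

End QSeries.

(* Write A_m(x,q) = x^m F_x(q^m), where
     F_y(z) = sum_k (-1)^k q^(k(k+1)/2) y^k z^k / ((q;q)_k (y^2 q;q)_k)
   is entire in z for |q| <> 1, the ratio of consecutive coefficients tending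
   to 0.  F_y solves F_y(z) + y^2 F_y(q^2 z) = (1 + y^2 - q z y) F_y(q z), so
   the Casoratian W(z) = x^-1 F_x(z) F_{1/x}(q z) - x F_x(q z) F_{1/x}(z) is
   invariant under z |-> q z; letting z tend to 0 along z q^(+-n) gives
   W = x^-1 - x.  As A_m B_{m+1} - A_{m+1} B_m = W(q^m), both identities are
   Cramer's rule for the pair (C_m, C_{m+1}), whatever its value. *)

From HB Require Import structures.
From mathcomp Require Import all_boot all_order all_algebra complex.
From mathcomp Require Import all_classical all_reals all_analysis.
From mathcomp Require Import ring lra.
Import Order.TTheory GRing.Theory Num.Theory Normc.
Import numFieldTopology.Exports numFieldNormedType.Exports.
Local Open Scope classical_set_scope.
Local Open Scope ring_scope.
Local Open Scope complex_scope.

Lemma series_half_ratio_cvg {R : realType} (b : nat -> R) :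
  (forall k, 0 <= b k) -> (\forall k \near \oo, b k.+1 <= b k / 2) ->
  cvgn (series b).
Proof.
move=> b0 [K _ bK].
have b_geo j : b (j + K)%N <= geometric (b K) 2^-1 j.
  elim: j => [|j IH]; first by rewrite /= add0n expr0 mulr1.
  rewrite addSn /= exprS mulrCA (mulrC 2^-1).
  by apply: le_trans (bK _ (leq_addl _ _)) _; rewrite ler_pM2r ?invr_gt0.
have tail_cvg : cvgn (series (fun j => b (j + K)%N)).
  apply: (series_le_cvg _ _ b_geo) => [j //|j|].
    by rewrite /= mulr_ge0 ?exprn_ge0 ?invr_ge0.
  apply: is_cvg_geometric_series.
  by rewrite gtr0_norm ?invr_gt0 // invf_lt1 // ltr1n.
apply/cvg_ex; exists (series b K + limn (series (fun j => b (j + K)%N))).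
rewrite -(cvg_shiftn K).
have -> : [sequence series b (n + K)%N]_n =
          (fun n => series b K + series (fun j => b (j + K)%N) n).
  apply/funext => n /=; rewrite series_addn; congr (_ + _).
  by rewrite -{1}[K]add0n big_addn addnK.
exact: cvgD (cvg_cst _) tail_cvg.
Qed.

Section ComplexModulus.
Context {R : realType}.
Local Notation C := R[i].
Implicit Types (z w : C) (u : nat -> C).

Lemma normr_normC z : `|z| = (normc z)%:C.
Proof. by case: z. Qed.

Lemma normc_eq1 z : (normc z == 1) = (`|z| == 1).
Proof. by rewrite -(inj_eq (@complexI _)) -normr_normC. Qed.

Lemma normc_ge0 z : 0 <= normc z.
Proof. by rewrite -ler0c -normr_normC. Qed.

Lemma normc_eq0 z : (normc z == 0) = (z == 0).
Proof. by rewrite -(inj_eq (@complexI _)) -normr_normC normr_eq0. Qed.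

Lemma normcX z n : normc (z ^+ n) = normc z ^+ n.
Proof. by elim: n => [|n IH]; rewrite ?normc1 // !exprS normcM IH. Qed.

Lemma normc_real (r : R) : normc r%:C = `|r|.
Proof. by rewrite /normc /= expr0n addr0 sqrtr_sqr. Qed.

Lemma Re_le_normc z : `|complex.Re z| <= normc z.
Proof. by rewrite -lecR -normr_normC normc_ge_Re. Qed.

Lemma Im_le_normc z : `|complex.Im z| <= normc z.
Proof. by case: z => a b; rewrite /= -sqrtr_sqr ler_wsqrtr // lerDr sqr_ge0. Qed.

Lemma normc_le_ReIm z : normc z <= `|complex.Re z| + `|complex.Im z|.
Proof.
rewrite {1}[z]complexE; apply: le_trans (le_normcD _ _) _.
by rewrite !normcM !normc_real /normc /= expr0n expr1n add0r sqrtr1 mul1r.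
Qed.

Lemma cvgC_normcP u l : u @ \oo --> l <->
  (forall eps : R, 0 < eps -> \forall n \near \oo, normc (l - u n) < eps).
Proof.
split=> [/cvgrPdist_lt H eps eps0|H].
  by apply: filterS (H eps%:C _) => [n|]; rewrite ?normr_normC ltcR.
apply/cvgrPdist_lt => e; case: e => a b; rewrite ltcE /= => /andP[/eqP-> a0].
by apply: filterS (H a a0) => n; rewrite normr_normC ltcR.
Qed.

Lemma cvgC_ReIm u (a b : R) :
  (fun n => complex.Re (u n)) @ \oo --> a ->
  (fun n => complex.Im (u n)) @ \oo --> b ->
  u @ \oo --> a +i* b.
Proof.
move=> /cvgrPdist_lt Ha /cvgrPdist_lt Hb; apply/cvgC_normcP => eps eps0.
have eps20 : 0 < eps / 2 by rewrite divr_gt0.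
near=> n; apply: le_lt_trans (normc_le_ReIm _) _.
rewrite [eps]splitr; apply: ltrD.
- have -> : complex.Re (a +i* b - u n) = a - complex.Re (u n) by case: (u n).
  by near: n; apply: Ha.
- have -> : complex.Im (a +i* b - u n) = b - complex.Im (u n) by case: (u n).
  by near: n; apply: Hb.
Unshelve. all: by end_near. Qed.

Lemma Re_series u n :
  complex.Re (series u n) = series (fun k => complex.Re (u k)) n.
Proof. by rewrite /series /= (raddf_sum (@complex.Re R : Rcomplex R -> R)). Qed.

Lemma Im_series u n :
  complex.Im (series u n) = series (fun k => complex.Im (u k)) n.
Proof. by rewrite /series /= (raddf_sum (@complex.Im R : Rcomplex R -> R)). Qed.

Lemma normc_series_le u n :
  normc (series u n) <= series (fun k => normc (u k)) n.
Proof.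
elim: n => [|n IH]; first by rewrite /series /= !big_geq // normc0.
by rewrite !seriesSr; apply: le_trans (le_normcD _ _) _; exact: lerD.
Qed.

Lemma series_normc_cvg u (g : nat -> R) :
  (forall k, normc (u k) <= g k) -> cvgn (series g) -> cvgn (series u).
Proof.
move=> ug cg.
have real_cvg (v : nat -> R) : (forall k, `|v k| <= normc (u k)) -> cvgn (series v).
  move=> vu; apply: (@normed_cvg R R^o).
  apply: (series_le_cvg _ _ (fun k => le_trans (vu k) (ug k)) cg) => // k.
  exact: le_trans (normc_ge0 _) (ug k).
apply/cvg_ex; eexists; apply: cvgC_ReIm.
- by under eq_fun do rewrite Re_series; exact: (real_cvg _ (fun k => Re_le_normc _)).
- by under eq_fun do rewrite Im_series; exact: (real_cvg _ (fun k => Im_le_normc _)).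
Qed.

Lemma normc_lim_le u l c (B : R) :
  u @ \oo --> l -> (forall n, normc (u n - c) <= B) -> normc (l - c) <= B.
Proof.
move=> /cvgC_normcP ul uB; rewrite leNgt; apply/negP => lB.
have [N _ HN] : \forall n \near \oo, normc (l - u n) < normc (l - c) - B.
  by apply: ul; rewrite subr_gt0.
have := le_normcD (l - u N) (u N - c); rewrite addrA subrK.
by move/le_lt_trans/(_ (ltr_leD (HN N (leqnn N)) (uB N))); rewrite subrK ltxx.
Qed.

Lemma ratio0_series_normc_cvg (a r : nat -> C) (rho : R) :
  (forall k, a k.+1 = a k * r k) -> r @ \oo --> 0 -> 0 <= rho ->
  cvgn (series (fun k => normc (a k) * rho ^+ k)).
Proof.
move=> ar /cvgC_normcP r0 rho0.
apply: series_half_ratio_cvg => [k|]; first by rewrite mulr_ge0 ?exprn_ge0 ?normc_ge0.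
have e0 : 0 < (2 * (rho + 1))^-1 by rewrite invr_gt0 mulr_gt0 // ltr_wpDl.
near=> k.
have rk : normc (r k) < (2 * (rho + 1))^-1.
  by near: k; apply: filterS (r0 _ e0) => k; rewrite sub0r normcN.
rewrite ar normcM exprS.
have -> : normc (a k) * normc (r k) * (rho * rho ^+ k) =
          (normc (a k) * rho ^+ k) * (normc (r k) * rho) by ring.
rewrite ler_wpM2l ?mulr_ge0 ?exprn_ge0 ?normc_ge0 //.
have rk0 := normc_ge0 (r k).
rewrite -[X in _ < X]div1r ltr_pdivlMr ?mulr_gt0 ?ltr_wpDl // in rk.
nra.
Unshelve. all: by end_near. Qed.

Lemma cvgC_expr0 (p : C) : normc p < 1 -> (fun n => p ^+ n) @ \oo --> 0.
Proof.
move=> p1; apply/cvgC_normcP => eps eps0.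
have : (fun n => normc p ^+ n) @ \oo --> (0 : R).
  by apply: cvg_expr; rewrite ger0_norm ?normc_ge0.
move=> /cvgrPdist_lt/(_ eps eps0); apply: filterS => n.
by rewrite !sub0r normcN normrN normcX ger0_norm ?exprn_ge0 ?normc_ge0.
Qed.

End ComplexModulus.

Lemma ratio_form_cvg0 {R : realType} (w : nat -> R[i]) (b c y : R[i]) :
  w @ \oo --> 0 -> b != 0 ->
  (fun k => - (w k * y) / ((1 - w k) * (b - c * w k))) @ \oo --> 0.
Proof.
move=> w0 b0.
have -> : 0 = - (0 * y) / ((1 - 0) * (b - c * 0)) by rewrite !mul0r oppr0 mul0r.
apply: cvgM; first by apply: cvgN; exact: cvgMr_tmp w0.
apply: cvgV; first by rewrite mulr0 !subr0 mul1r.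
by apply: cvgM; apply: cvgB;
  [exact: cvg_cst | exact: w0 | exact: cvg_cst | exact: cvgMl_tmp w0].
Qed.

(* The shape of the right-hand side is the one expected by [ratio_form_cvg0]. *)
Lemma ratio_form_inv (F : fieldType) (Q y : F) : Q != 0 ->
  - (Q * y) / ((1 - Q) * (1 - y ^+ 2 * Q)) =
  - (Q^-1 * y) / ((1 - Q^-1) * (y ^+ 2 - 1 * Q^-1)).
Proof.
move=> Q0.
have -> : 1 - Q^-1 = - Q^-1 * (1 - Q) by field.
have -> : y ^+ 2 - 1 * Q^-1 = - Q^-1 * (1 - y ^+ 2 * Q) by field.
rewrite mulrACA !invfM invrN invrK.
move: (1 - Q)^-1 (1 - y ^+ 2 * Q)^-1 => a b.
by field.
Qed.

Section BasicHypergeometric.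
Context {R : realType}.
Local Notation C := R[i].
Variables q y : C.

Definition tri k := (k * k.+1)./2.

Lemma triS k : tri k.+1 = (tri k + k.+1)%N.
Proof.
rewrite /tri.
have -> : (k.+1 * k.+2 = k * k.+1 + (k.+1).*2)%N by rewrite -mul2n; ring.
by rewrite halfD odd_double andbF add0n doubleK.
Qed.

Lemma qpochS a k : qpoch a q k.+1 = qpoch a q k * (1 - a * q ^+ k).
Proof. by rewrite /qpoch big_ord_recr. Qed.

Definition Fcoef k : C :=
  (-1) ^+ k * q ^+ tri k * y ^+ k / (qpoch q q k * qpoch (y ^+ 2 * q) q k).

Definition Fratio k : C :=
  - (q ^+ k.+1 * y) / ((1 - q ^+ k.+1) * (1 - y ^+ 2 * q ^+ k.+1)).

Lemma FcoefS k : Fcoef k.+1 = Fcoef k * Fratio k.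
Proof.
rewrite /Fcoef /Fratio triS !qpochS exprD !invfM -mulrA -exprS.
by rewrite -[y ^+ 2 * q * _]mulrA -exprS (exprS (-1)) (exprS y); ring.
Qed.

Definition Fser z := limn (series (fun k => Fcoef k * z ^+ k)).

Lemma Fcoef0 : Fcoef 0 = 1.
Proof. by rewrite /Fcoef /qpoch /tri !big_ord0 !expr0 !mul1r invr1. Qed.

Hypotheses (q_neq1 : normc q != 1) (y_neq0 : y != 0).

Lemma Fratio_cvg0 : Fratio @ \oo --> 0.
Proof.
case: (ltgtP (normc q) 1) q_neq1 => // [q_lt1 | q_gt1] _.
  apply: (@ratio_form_cvg0 _ (fun k => q ^+ k.+1)) (oner_neq0 _).
  by rewrite (cvg_shiftS (fun k => q ^+ k)); exact: cvgC_expr0.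
have q0 : q != 0 by rewrite -normc_eq0 gt_eqF // (lt_trans ltr01 q_gt1).
have -> : Fratio = fun k => - (q^-1 ^+ k.+1 * y) /
    ((1 - q^-1 ^+ k.+1) * (y ^+ 2 - 1 * q^-1 ^+ k.+1)).
  by apply/funext => k; rewrite /Fratio ratio_form_inv ?expf_neq0 // exprVn.
apply: ratio_form_cvg0; last by rewrite expf_neq0.
rewrite (cvg_shiftS (fun k => q^-1 ^+ k)); apply: cvgC_expr0.
by rewrite normcV invf_lt1 // (lt_trans ltr01 q_gt1).
Qed.

Lemma subr_expr_neq0 n : 1 - q ^+ n.+1 != 0.
Proof.
rewrite subr_eq0 eq_sym; apply: contra q_neq1 => /eqP qn1.
by rewrite -(pexpr_eq1 (ltn0Sn n) (normc_ge0 q)) -normcX qn1 normc1.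
Qed.

Lemma Fcoef_normc_cvg (rho : R) : 0 <= rho ->
  cvgn (series (fun k => normc (Fcoef k) * rho ^+ k)).
Proof. exact: ratio0_series_normc_cvg _ _ _ FcoefS Fratio_cvg0. Qed.

Lemma Fser_cvg z : series (fun k => Fcoef k * z ^+ k) @ \oo --> Fser z.
Proof.
apply: (series_normc_cvg _ (fun k => normc (Fcoef k) * normc z ^+ k)).
  by move=> k; rewrite normcM normcX.
exact: Fcoef_normc_cvg (normc_ge0 z).
Qed.

Lemma Fser_sub1_bound : exists K : R, forall z, normc z <= 1 ->
  normc (Fser z - 1) <= K * normc z.
Proof.
set b := fun k => normc (Fcoef k).
have b_cvg : cvgn (series b).
  have -> : b = fun k => normc (Fcoef k) * 1 ^+ k.
    by apply/funext => k; rewrite expr1n mulr1.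
  exact: Fcoef_normc_cvg ler01.
exists (limn (series b)) => z z1.
have := Fser_cvg z; rewrite -cvg_shiftS => /normc_lim_le; apply => N /=.
rewrite /series /= big_nat_recl // expr0 Fcoef0 mulr1 addrC addKr.
apply: le_trans (normc_series_le (fun k => Fcoef k.+1 * z ^+ k.+1) N) _.
apply: (@le_trans _ _ (normc z * series b N.+1)).
  rewrite /series /= big_nat_recl // mulrDr mulr_sumr ler_wpDl ?mulr_ge0 ?normc_ge0 //.
  apply: ler_sum => k _; rewrite normcM normcX exprS mulrCA ler_wpM2l ?normc_ge0 //.
  by rewrite ler_piMr ?normc_ge0 // exprn_ile1 ?normc_ge0.
rewrite mulrC ler_wpM2r ?normc_ge0 //.
apply: (nondecreasing_cvgn_le _ b_cvg).
by apply: nondecreasing_series => k _ _; exact: normc_ge0.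
Qed.

Lemma Fser_cvg_to1 (w : nat -> C) :
  w @ \oo --> 0 -> (fun n => Fser (w n)) @ \oo --> (1 : C).
Proof.
have [K HK] := Fser_sub1_bound.
move=> /cvgC_normcP w0; apply/cvgC_normcP => eps eps0.
have K1 : 0 < `|K| + 1 by rewrite ltr_wpDl.
near=> n.
have wn1 : normc (w n) < 1.
  by near: n; apply: filterS (w0 _ ltr01) => n; rewrite sub0r normcN.
have wn_eps : normc (w n) < eps / (`|K| + 1).
  by near: n; apply: filterS (w0 _ (divr_gt0 eps0 K1)) => n; rewrite sub0r normcN.
rewrite -normcN opprB; apply: le_lt_trans (HK _ (ltW wn1)) _.
rewrite ltr_pdivlMr // in wn_eps.
have := normc_ge0 (w n); have := ler_norm K; nra.
Unshelve. all: by end_near. Qed.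

Lemma Fcoef_rec k : 1 - y ^+ 2 * q ^+ k.+1 != 0 ->
  Fcoef k.+1 * ((1 - q ^+ k.+1) * (1 - y ^+ 2 * q ^+ k.+1)) =
  - (q ^+ k.+1 * y) * Fcoef k.
Proof.
move=> yq; rewrite FcoefS /Fratio -mulrA mulfVK 1?mulrC //.
by rewrite mulf_neq0 ?subr_expr_neq0.
Qed.

Lemma Fser_qdiff z : (forall n, 1 - y ^+ 2 * q ^+ n.+1 != 0) ->
  Fser z + y ^+ 2 * Fser (q ^+ 2 * z) = (1 + y ^+ 2 - q * z * y) * Fser (q * z).
Proof.
move=> yq.
pose f w k := Fcoef k * w ^+ k.
pose d k := f z k - (1 + y ^+ 2) * f (q * z) k + y ^+ 2 * f (q ^+ 2 * z) k.
have dS k : d k.+1 = - (q * y * z) * f (q * z) k.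
  rewrite /d /f.
  have -> : (q ^+ 2 * z) ^+ k.+1 = (q ^+ k.+1) ^+ 2 * z ^+ k.+1.
    by rewrite exprMn exprAC.
  have -> : (q * z) ^+ k.+1 = q ^+ k.+1 * z ^+ k.+1 by rewrite exprMn.
  apply: (@etrans _ _
    (Fcoef k.+1 * ((1 - q ^+ k.+1) * (1 - y ^+ 2 * q ^+ k.+1)) * z ^+ k.+1)).
    by ring.
  by rewrite Fcoef_rec // exprMn !exprS; ring.
have series_d n : series d n.+1 = - (q * y * z) * series (f (q * z)) n.
  have d0 : d 0 = 0 by rewrite /d /f !expr0 !mulr1; ring.
  rewrite /series /= big_nat_recl // d0 add0r mulr_sumr.
  by apply: eq_bigr => k _; exact: dS.
have dE n : series d n = series (f z) n - (1 + y ^+ 2) * series (f (q * z)) n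
                         + y ^+ 2 * series (f (q ^+ 2 * z)) n.
  by rewrite /series /= !mulr_sumr -sumrB -big_split.
have lim_comb : (fun n => series d n.+1) @ \oo -->
    Fser z - (1 + y ^+ 2) * Fser (q * z) + y ^+ 2 * Fser (q ^+ 2 * z).
  rewrite (cvg_shiftS (series d)) (funext dE).
  apply: cvgD; last exact: cvgMl_tmp (Fser_cvg _).
  by apply: cvgB; [exact: Fser_cvg | exact: cvgMl_tmp (Fser_cvg _)].
have lim_shift : (fun n => series d n.+1) @ \oo --> - (q * y * z) * Fser (q * z).
  under eq_fun do rewrite series_d.
  exact: cvgMl_tmp (Fser_cvg _).
have -> : (1 + y ^+ 2 - q * z * y) * Fser (q * z) =
          (1 + y ^+ 2) * Fser (q * z) + - (q * y * z) * Fser (q * z) by ring.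
by rewrite -(norm_cvg_unique lim_comb lim_shift); ring.
Qed.

End BasicHypergeometric.

Lemma casoratian_shift (F : fieldType) (x u F0 F1 F2 G0 G1 G2 : F) : x != 0 ->
  F0 + x ^+ 2 * F2 = (1 + x ^+ 2 - u * x) * F1 ->
  G0 + x^-1 ^+ 2 * G2 = (1 + x^-1 ^+ 2 - u * x^-1) * G1 ->
  x^-1 * F1 * G2 - x * F2 * G1 = x^-1 * F0 * G1 - x * F1 * G0.
Proof.
move=> x0 hF hG.
rewrite -[F0](addrK (x ^+ 2 * F2)) -[G0](addrK (x^-1 ^+ 2 * G2)) hF hG.
by field.
Qed.

Lemma subr_mul_neq0 (F : fieldType) (a b : F) : a != 0 -> a^-1 != b -> 1 - a * b != 0.
Proof.
move=> a0; apply: contra; rewrite subr_eq0 eq_sym => /eqP ab1.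
by rewrite -[b](mulKf a0) ab1 mulr1.
Qed.

Lemma Am_Fser {R : realType} (q x : R[i]) m : q != 0 -> normc q != 1 -> x != 0 ->
  Am m x q = x ^ m * Fser q x (q ^ m).
Proof.
move=> q0 q1 x0; rewrite /Am; apply: norm_cvg_lim.
have term_eq k : (-1) ^+ k * q ^ (((k * k.+1)./2)%:Z + k%:Z * m) * x ^ (k%:Z + m)
    / (qpoch q q k * qpoch (x ^+ 2 * q) q k) = x ^ m * (Fcoef q x k * (q ^ m) ^+ k).
  rewrite (expfzDr _ _ q0) (expfzDr _ _ x0) (mulrC k%:Z m) -(exprz_exp q m k).
  rewrite /Fcoef /tri -!exprnP.
  by ring.
under eq_fun do under eq_bigr do rewrite term_eq.
under eq_fun do rewrite -mulr_sumr.
exact: cvgMl_tmp (Fser_cvg q x q1 x0 (q ^ m)).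
Qed.

Section Wronskian.
Context {R : realType}.
Local Notation C := R[i].
Variables q x : C.

Definition wronskian z :=
  x^-1 * Fser q x z * Fser q x^-1 (q * z) - x * Fser q x (q * z) * Fser q x^-1 z.

Hypotheses (q_neq1 : normc q != 1) (x_neq0 : x != 0).
Hypotheses (x2q_neq1 : forall n, 1 - x ^+ 2 * q ^+ n.+1 != 0)
           (xV2q_neq1 : forall n, 1 - x^-1 ^+ 2 * q ^+ n.+1 != 0).

Lemma wronskian_qinvariant z : wronskian (q * z) = wronskian z.
Proof.
have hF := Fser_qdiff q x q_neq1 x_neq0 z x2q_neq1.
have hG := Fser_qdiff q x^-1 q_neq1 (invr_neq0 x_neq0) z xV2q_neq1.
have qqz : q ^+ 2 * z = q * (q * z) by rewrite expr2 mulrA.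
rewrite qqz in hF hG.
exact: casoratian_shift x_neq0 hF hG.
Qed.

Lemma wronskian_eq z : wronskian z = x^-1 - x.
Proof.
have [p p_lt1 wp] : exists2 p, normc p < 1 & forall z, wronskian (p * z) = wronskian z.
  case: (ltgtP (normc q) 1) q_neq1 => // [q_lt1|q_gt1] _.
    by exists q => //; exact: wronskian_qinvariant.
  have q0 : q != 0 by rewrite -normc_eq0 gt_eqF // (lt_trans ltr01 q_gt1).
  exists q^-1 => [|z']; first by rewrite normcV invf_lt1 // (lt_trans ltr01 q_gt1).
  by rewrite -[in RHS](mulVKf q0 z') wronskian_qinvariant.
have w_const n : wronskian (z * p ^+ n) = wronskian z.
  elim: n => [|n IH]; first by rewrite expr0 mulr1.
  by rewrite exprS mulrCA wp.
have zp0 : (fun n => z * p ^+ n) @ \oo --> 0.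
  by rewrite -(mulr0 z); exact: cvgMl_tmp (cvgC_expr0 _ p_lt1).
have qzp0 : (fun n => q * (z * p ^+ n)) @ \oo --> 0.
  by rewrite -(mulr0 q); exact: cvgMl_tmp zp0.
have Fx := Fser_cvg_to1 q x q_neq1 x_neq0.
have FxV := Fser_cvg_to1 q x^-1 q_neq1 (invr_neq0 x_neq0).
have w_lim : (fun n => wronskian (z * p ^+ n)) @ \oo --> x^-1 * 1 * 1 - x * 1 * 1.
  rewrite /wronskian; apply: cvgB; apply: cvgM.
  - exact: cvgMl_tmp (Fx _ zp0).
  - exact: FxV _ qzp0.
  - exact: cvgMl_tmp (Fx _ qzp0).
  - exact: FxV _ zp0.
rewrite (funext w_const) in w_lim.
by rewrite -(norm_cvg_unique w_lim (cvg_cst _)) !mulr1.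
Qed.

End Wronskian.

Lemma Am_Bm_wronskian {R : realType} (q x : R[i]) m :
  q != 0 -> normc q != 1 -> x != 0 ->
  Am m x q * Bm (m + 1) x q - Am (m + 1) x q * Bm m x q = wronskian q x (q ^ m).
Proof.
move=> q0 q1 x0; have xV0 := invr_neq0 x0.
rewrite /Bm !(Am_Fser _ x _ q0 q1 x0) !(Am_Fser _ x^-1 _ q0 q1 xV0).
rewrite (expfzDr _ _ q0) (expfzDr _ _ x0) (expfzDr _ _ xV0).
rewrite !expr1z -(expfV x m) (mulrC (q ^ m) q) /wronskian.
move: (Fser q x (q ^ m)) (Fser q x (q * q ^ m)) => F0 F1.
move: (Fser q x^-1 (q ^ m)) (Fser q x^-1 (q * q ^ m)) => G0 G1.
have := expfz_neq0 m x0; move: (x ^ m) => X X0.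
by field; rewrite X0 x0.
Qed.

Lemma solve_by_casoratian (F : fieldType) (a a' b b' c c' d : F) :
  d != 0 -> a * b' - a' * b = d ->
  c = d^-1 * (a * (b' * c - b * c') - b * (a' * c - a * c')) /\
  c' = d^-1 * (a' * (b' * c - b * c') - b' * (a' * c - a * c')).
Proof.
move=> d0 dE.
have cE : a * (b' * c - b * c') - b * (a' * c - a * c') = d * c by rewrite -dE; ring.
have c'E : a' * (b' * c - b * c') - b' * (a' * c - a * c') = d * c' by rewrite -dE; ring.
by rewrite cE c'E !mulKf.
Qed.

Theorem corollary3p3 (R : realType) (q x : R[i]) (m : int) :
  q != 0 -> `|q| != 1 -> x != 0 ->
  (forall n : int,
      [/\ x != q ^ n, x^-1 != q ^ n, x ^+ 2 != q ^ n & x ^- 2 != q ^ n]) ->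
  Cm m x q =
    (x^-1 - x)^-1 * (Am m x q * LBm m x q - Bm m x q * LAm m x q) /\
  Cm (m + 1) x q =
    (x^-1 - x)^-1 * (Am (m + 1) x q * LBm m x q - Bm (m + 1) x q * LAm m x q).
Proof.
move=> q0 q_norm1 x0 nonres.
have q_neq1 : normc q != 1 by rewrite normc_eq1.
have xq n : 1 - x ^+ 2 * q ^+ n.+1 != 0.
  apply: subr_mul_neq0; first exact: expf_neq0.
  by case: (nonres n.+1) => _ _ _ ->.
have xVq n : 1 - x^-1 ^+ 2 * q ^+ n.+1 != 0.
  apply: subr_mul_neq0; first by rewrite expf_neq0 ?invr_eq0.
  by rewrite exprVn invrK; case: (nonres n.+1) => _ _ -> _.
have xVx : x^-1 - x != 0.
  have [_ _ x2 _] := nonres 0.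
  rewrite subr_eq0; apply: contraNneq x2 => xVx.
  by rewrite expr0z expr2 -{1}xVx mulVf.
apply: solve_by_casoratian xVx _.
by rewrite (Am_Bm_wronskian q x m q0 q_neq1 x0) (wronskian_eq q x q_neq1 x0 xq xVq).
Qed.
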